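(* The set $\{\pi\in\mathcal P:\text{all parts of }\pi\text{ are distinct}\}$ is $\Pi_2$-definable in $\mathbf Y^*=\langle\mathcal P,\le,[1]+[1]\rangle$.
   Context: $\mathcal P$ is the set of all integer partitions, including the empty partition; a partition is a nonincreasing finite sequence of positive integers (its parts). Young's lattice $\mathbf Y=\langle\mathcal P,\le\rangle$ has $(s_1,\dots,s_r)\le(n_1,\dots,n_t)$ iff $r\le t$ and $s_i\le n_i$ for all $i\le r$; $\mathbf Y^*$ is $\mathbf Y$ with a constant symbol for the partition $(1,1)$. A relation is $\Pi_n$-definable if it is defined by a first-order formula in the language $\{\le,(1,1)\}$ in prenex form with $n$ alternating quantifier blocks, the outermost universal, and a quantifier-free matrix. *)

From mathcomp Require Import all_boot.
Set Implicit Arguments. Unset Strict Implicit. Unset Printing Implicit Defensive.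

Definition is_partition (s : seq nat) : bool :=
  sorted geq s && all (fun n => 0 < n) s.

Record partition := Partition { parts : seq nat; partsP : is_partition parts }.

Definition yle (p q : partition) : Prop :=
  size (parts p) <= size (parts q) /\
  forall i, i < size (parts p) -> nth 0 (parts p) i <= nth 0 (parts q) i.

(* The constant (1,1) = [1]+[1]. *)
Lemma is_partition_11 : is_partition [:: 1; 1]. Proof. by []. Qed.
Definition p11 : partition := Partition is_partition_11.

Inductive term := TVar of nat | TC.

Inductive formula :=
| FLe of term & term
| FEq of term & term
| FNot of formula
| FAnd of formula & formula
| FOr of formula & formula
| FForall of nat & formula
| FExists of nat & formula.

Definition env := nat -> partition.
Definition upd (e : env) (x : nat) (p : partition) : env :=
  fun y => if y == x then p else e y.

Definition eval_term (e : env) (t : term) : partition :=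
  match t with TVar n => e n | TC => p11 end.

Fixpoint sat (e : env) (f : formula) : Prop :=
  match f with
  | FLe a b => yle (eval_term e a) (eval_term e b)
  | FEq a b => eval_term e a = eval_term e b
  | FNot g => ~ sat e g
  | FAnd g h => sat e g /\ sat e h
  | FOr g h => sat e g \/ sat e h
  | FForall x g => forall p, sat (upd e x p) g
  | FExists x g => exists p, sat (upd e x p) g
  end.

Fixpoint qfree (f : formula) : bool :=
  match f with
  | FLe _ _ | FEq _ _ => true
  | FNot g => qfree g
  | FAnd g h | FOr g h => qfree g && qfree h
  | FForall _ _ | FExists _ _ => false
  end.

(* Blocks are allowed to be empty (standard). *)
(* Unfolded:  Pi_0 = Sigma_0 = quantifier-free;
   Pi_(n+1)    = (forall x, Pi_(n+1)) or Sigma_n;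
   Sigma_(n+1) = (exists x, Sigma_(n+1)) or Pi_n. *)
Fixpoint prenex (f : formula) (n : nat) (pi : bool) {struct f} : bool :=
  match f with
  | FForall _ g =>
      if pi then (if n is 0 then false else prenex g n true)
      else (if n is n'.+2 then prenex g n'.+1 true else false)
  | FExists _ g =>
      if pi then (if n is n'.+2 then prenex g n'.+1 false else false)
      else (if n is 0 then false else prenex g n false)
  | _ => qfree f
  end.

Definition is_Pi (n : nat) (f : formula) : bool := prenex f n true.
Definition is_Sigma (n : nat) (f : formula) : bool := prenex f n false.

Definition Pi_definable (n : nat) (S : partition -> Prop) : Prop :=
  exists (f : formula) (x : nat), is_Pi n f /\
    forall (e : env) (p : partition), sat (upd e x p) f <-> S p.

Definition distinct_parts (p : partition) : Prop := uniq (parts p).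

From Pilot Require Import Defs.
From mathcomp Require Import all_boot zify.
From Stdlib Require Import Classical.

Set Implicit Arguments.
Unset Strict Implicit.
Unset Printing Implicit Defensive.

(* A three-element chain s < t < p that is a whole interval [s, p] is
   a domino: p arises from s by adding two adjacent cells, side by side in one
   row or one above the other in one column, and p has a repeated part iff
   some vertical domino ends at p.  The orientation is expressible with the
   constant (1,1): the minimal partition outside s below t is the rectangle R
   spanned by the cell t/s; among the minimal partitions outside R the only
   one above (1,1) is the column C of cells just below R; and the domino is
   vertical iff every u <= p that is not below t lies above C.  Spelled out,
   this is a formula  forall s t r c, exists u, (quantifier-free). *)

Definition row (p : Defs.partition) (i : nat) : nat := nth 0 (parts p) i.

Lemma row_noninc p i : row p i.+1 <= row p i.
Proof.
have /andP[sorted_p _] := partsP p; rewrite /row.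
elim: (parts p) i sorted_p => [|x s IH] [|i] //= sorted_xs.
- by case: s sorted_xs {IH} => [|y s] //= /andP[].
- exact/IH/(path_sorted sorted_xs).
Qed.

Lemma row_mono p i j : i <= j -> row p j <= row p i.
Proof.
elim: j => [|j IH]; first by rewrite leqn0 => /eqP ->.
rewrite leq_eqVlt => /orP[/eqP -> //|lt_ij].
exact: leq_trans (row_noninc p j) (IH lt_ij).
Qed.

Lemma row_pos p i : (0 < row p i) = (i < size (parts p)).
Proof.
have /andP[_ pos_p] := partsP p; rewrite /row.
case: (ltnP i (size (parts p))) => [lt_i|le_i]; first exact: (all_nthP 0 pos_p).
by rewrite nth_default.
Qed.

Lemma row_default p i : size (parts p) <= i -> row p i = 0.
Proof. exact: nth_default. Qed.

Lemma yleE p q : yle p q <-> forall i, row p i <= row q i.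
Proof.
split=> [[_ le_pq] i|le_pq].
  by case: (ltnP i (size (parts p))) => [/le_pq //|/row_default ->].
split=> [|i _]; last exact: le_pq.
rewrite leqNgt; apply/negP => lt_qp.
have := le_pq (size (parts q)).
by rewrite (row_default (leqnn _)) leqn0 eqn0Ngt row_pos lt_qp.
Qed.

Lemma partition_ext p q : (forall i, row p i = row q i) -> p = q.
Proof.
move=> eq_pq.
have size_le p' q' : (forall i, row p' i = row q' i) ->
    size (parts p') <= size (parts q').
  move=> eq_pq'; rewrite leqNgt; apply/negP => lt_qp.
  by have := row_pos p' (size (parts q')); rewrite lt_qp eq_pq' row_default.
have eq_size : size (parts p) = size (parts q).
  by apply/eqP; rewrite eqn_leq !size_le.
case: p q eq_pq eq_size => [s part_s] [t part_t] /= eq_st eq_size.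
have eq_parts : s = t by apply: (eq_from_nth (x0 := 0)) => // i _; exact: eq_st.
by subst t; congr Partition; exact: bool_irrelevance.
Qed.

Lemma row_neq p q i : row p i <> row q i -> p <> q.
Proof. by move=> neq_i eq_pq; apply: neq_i; rewrite eq_pq. Qed.

Lemma partition_of_rows (g : nat -> nat) n :
  (forall i, g i.+1 <= g i) -> (forall i, n <= i -> g i = 0) ->
  exists p, forall i, row p i = g i.
Proof.
elim: n g => [|n IH] g noninc_g zero_g.
  have nil_part : is_partition [::] by [].
  by exists (Partition nil_part) => i; rewrite /row nth_nil zero_g.
have [p row_p] := IH (fun i => g i.+1) (fun i => noninc_g i.+1)
  (fun i le_ni => zero_g i.+1 le_ni).
case: (posnP (g 0)) => [g0|g0_pos].
  have nil_part : is_partition [::] by [].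
  exists (Partition nil_part) => i; rewrite /row nth_nil.
  by apply/esym/eqP; rewrite -leqn0 -g0; elim: i => [|i IHi] //;
     exact: leq_trans (noninc_g i) IHi.
have cons_part : is_partition (g 0 :: parts p).
  have /andP[sorted_p pos_p] := partsP p.
  rewrite /is_partition /= g0_pos pos_p andbT.
  move: sorted_p (row_p 0); rewrite /row.
  by case: (parts p) => [|y s] //= -> ->; rewrite noninc_g.
by exists (Partition cons_part) => -[|i] //=; exact: row_p.
Qed.

Lemma yle_trans p q r : yle p q -> yle q r -> yle p r.
Proof. by move=> /yleE le_pq /yleE le_qr; apply/yleE => i; exact: leq_trans. Qed.

Lemma yle_anti p q : yle p q -> yle q p -> p = q.
Proof.
by move=> /yleE le_pq /yleE le_qp; apply: partition_ext => i; apply/eqP;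
   rewrite eqn_leq le_pq le_qp.
Qed.

Definition ylt (p q : Defs.partition) : Prop := yle p q /\ p <> q.

Lemma ylt_yle_trans p q r : ylt p q -> yle q r -> ylt p r.
Proof.
move=> [le_pq neq_pq] le_qr; split; first exact: yle_trans le_qr.
by move=> eq_pr; subst r; apply: neq_pq; exact: yle_anti.
Qed.

Lemma yle_ylt_trans p q r : yle p q -> ylt q r -> ylt p r.
Proof.
move=> le_pq [le_qr neq_qr]; split; first exact: yle_trans le_qr.
by move=> eq_pr; subst r; apply: neq_qr; exact: yle_anti.
Qed.

Lemma ylt_row p q : ylt p q -> exists i, row p i < row q i.
Proof.
move=> [/yleE le_pq neq_pq]; apply: NNPP => no_row.
apply/neq_pq/partition_ext => i; apply/eqP; rewrite eqn_leq le_pq leqNgt.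
by apply/negP => lt_i; apply: no_row; exists i.
Qed.

Lemma nyle_row p q : ~ yle p q -> exists i, row q i < row p i.
Proof.
move=> nle_pq; apply: NNPP => no_row; apply/nle_pq/yleE => i.
by rewrite leqNgt; apply/negP => lt_i; apply: no_row; exists i.
Qed.

Definition strict_rows (p : Defs.partition) : Prop :=
  forall i, 0 < row p i.+1 -> row p i.+1 < row p i.

Lemma distinct_partsE p : distinct_parts p <-> strict_rows p.
Proof.
split=> [uniq_p i pos_i|strict_p].
  rewrite ltn_neqAle row_noninc andbT; apply/negP => /eqP eq_i.
  have lt_i : i.+1 < size (parts p) by rewrite -row_pos.
  have := nth_uniq 0 (ltnW lt_i) lt_i uniq_p.
  by rewrite -/(row p i) -/(row p i.+1) eq_i eqxx ltn_eqF.
apply: contraT => /(uniqPn 0) [i [j [lt_ij lt_j eq_ij]]].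
have pos_i : 0 < row p i.+1 by rewrite row_pos; exact: leq_ltn_trans lt_ij lt_j.
have := strict_p i pos_i; have := row_mono p lt_ij.
by rewrite -/(row p i) -/(row p j) in eq_ij; lia.
Qed.

Definition adds_cell (x y : Defs.partition) (a : nat) : Prop :=
  forall i, row y i = if i == a then (row x a).+1 else row x i.

Definition addable (x : Defs.partition) (a : nat) : Prop :=
  forall i, i < a -> row x a < row x i.

Lemma adds_cell_ylt x y a : adds_cell x y a -> ylt x y.
Proof.
move=> add_a; split; last by apply: (@row_neq _ _ a); rewrite add_a eqxx; lia.
by apply/yleE => i; rewrite add_a; case: eqP => [->|_].
Qed.

Lemma adds_cell_addable x y a : adds_cell x y a -> addable x a.
Proof.
move=> add_a i lt_ia; have := row_mono y (ltnW lt_ia).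
by rewrite !add_a eqxx (ltn_eqF lt_ia).
Qed.

Lemma add_cell x a : addable x a -> exists y, adds_cell x y a.
Proof.
move=> addable_a.
apply: (@partition_of_rows _ (size (parts x) + a).+1) => [i|i lt_i].
  have := row_noninc x i; have := addable_a i.
  case: (eqVneq i.+1 a) => [<-|_]; first by rewrite (ltn_eqF (ltnSn i)); lia.
  by case: eqP => [eq_ia|_]; [subst a|]; lia.
by case: eqP => [eq_ia|_]; [lia | apply: row_default; lia].
Qed.

Lemma remove_cell p a : row p a.+1 < row p a -> exists x, adds_cell x p a.
Proof.
move=> corner_a.
have [x row_x] : exists x,
    forall i, row x i = if i == a then (row p a).-1 else row p i.
  apply: (@partition_of_rows _ (size (parts p))) => [i|i le_i].
    have := row_noninc p i; case: (eqVneq i.+1 a) => [<-|_].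
      by rewrite (ltn_eqF (ltnSn i)); lia.
    by case: eqP => [eq_ia|_]; [subst a|]; lia.
  by case: eqP => [<-|_]; rewrite row_default.
exists x => i; rewrite !row_x eqxx; case: eqP => [->|//]; lia.
Qed.

(* Below any strictly larger partition there is a one-cell extension: add the
   cell in the first row where the two partitions differ. *)
Lemma cell_below x y : ylt x y -> exists a u, adds_cell x u a /\ yle u y.
Proof.
move=> lt_xy; move/yleE: (lt_xy.1) => le_xy.
have [a lt_a min_a] := ex_minnP (ylt_row lt_xy).
have [u add_a] : exists u, adds_cell x u a.
  apply: add_cell => i lt_ia; apply: leq_trans lt_a _.
  have := row_mono y (ltnW lt_ia); have := le_xy i.
  case: (ltnP (row x i) (row y i)) => [/min_a|]; lia.
exists a, u; split=> //; apply/yleE => i; rewrite add_a.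
by case: eqP => [->|_].
Qed.

Lemma adds_cell_new_row x y a u :
  adds_cell x y a -> yle u y -> ~ yle u x -> row x a < row u a.
Proof.
move=> add_a /yleE le_uy /nyle_row [j lt_j].
have := le_uy j; rewrite add_a; case: eqP => [<-|_] //; lia.
Qed.

Definition is_rect (r : Defs.partition) (m n : nat) : Prop :=
  forall i, row r i = if i < m then n else 0.

Lemma rect_exists m n : exists r, is_rect r m n.
Proof.
apply: (@partition_of_rows _ m) => [i|i le_mi]; last by rewrite ltnNge le_mi.
by case: (ltnP i.+1 m) => [/ltnW ->|_] //; case: ifP.
Qed.

Lemma rect_yle r m n p : is_rect r m.+1 n -> n <= row p m -> yle r p.
Proof.
move=> rect_r le_n; apply/yleE => i; rewrite rect_r; case: ltnP => // lt_im.
exact: leq_trans le_n (row_mono p _).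
Qed.

Definition minimal_outside (x y : Defs.partition) : Prop :=
  ~ yle x y /\ forall u, ylt u x -> yle u y.

Lemma minimal_outside_rect x y i :
  minimal_outside x y -> row y i < row x i -> is_rect x i.+1 (row x i).
Proof.
move=> [nle_xy min_x] lt_i.
have [r rect_r] := rect_exists i.+1 (row x i).
have le_rx : yle r x by apply: rect_yle rect_r _.
have nle_ry : ~ yle r y.
  by move=> /yleE /(_ i); rewrite rect_r ltnSn leqNgt lt_i.
have eq_xr : x = r.
  by apply: NNPP => neq_xr; apply/nle_ry/min_x; split=> // /esym.
by rewrite {1}eq_xr.
Qed.

Lemma rect_minimal_outside r y a :
  addable y a -> is_rect r a.+1 (row y a).+1 -> minimal_outside r y.
Proof.
move=> addable_a rect_r; split.
  by move=> /yleE /(_ a); rewrite rect_r ltnSn ltnn.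
move=> u [/yleE le_ur neq_ur]; apply: NNPP => /nyle_row [j lt_j].
have le_ja : j <= a by have := le_ur j; rewrite rect_r ltnS; case: (leqP j a); lia.
have eq_ja : j = a.
  have := le_ur j; rewrite rect_r ltnS le_ja; case: (ltnP j a) => [/addable_a|]; lia.
subst j; apply/neq_ur/partition_ext => i; have := le_ur i; rewrite rect_r ltnS.
case: (leqP i a) => [le_ia|_]; last lia.
by have := row_mono u le_ia; have := le_ur a; rewrite rect_r ltnSn; lia.
Qed.

Definition chain2 (s t p : Defs.partition) : Prop :=
  ylt s t /\ ylt t p /\ forall u, ylt s u -> ylt u p -> u = t.

Lemma chain2_cells s t p :
  chain2 s t p -> exists a b, adds_cell s t a /\ adds_cell t p b.
Proof.
move=> [lt_st [lt_tp only_t]].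
have [a [u [add_a le_ut]]] := cell_below lt_st.
have eq_ut : u = t.
  exact: only_t (adds_cell_ylt add_a) (yle_ylt_trans le_ut lt_tp).
have [b [v [add_b le_vp]]] := cell_below lt_tp.
have lt_tv := adds_cell_ylt add_b.
have eq_vp : v = p.
  apply: NNPP => neq_vp; apply: lt_tv.2; apply/esym/only_t; last by split.
  exact: ylt_yle_trans lt_st lt_tv.1.
by exists a, b; rewrite -{1}eq_ut -eq_vp.
Qed.

(* Otherwise the cell p/t could be added to s directly, giving a second
   partition strictly between s and p. *)
Lemma chain2_shape s t p a b :
  chain2 s t p -> adds_cell s t a -> adds_cell t p b ->
  b = a \/ (b = a.+1 /\ row s a.+1 = row s a).
Proof.
move=> [lt_st [lt_tp only_t]] add_a add_b.
apply: NNPP => /not_or_and [/eqP neq_ba not_vert].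
have row_t i : i != a -> row t i = row s i.
  by move=> /negbTE neq_ia; rewrite add_a neq_ia.
have addable_b : addable s b.
  move=> i lt_ib; have := adds_cell_addable add_b lt_ib; rewrite row_t //.
  case: (eqVneq i a) => [eq_ia|/row_t -> //]; subst i.
  rewrite add_a eqxx; have := row_noninc s a.
  case: (ltnP a.+1 b) => [lt_a1b|le_ba1].
    (* the row a + 1 lies in between: s_b < s_(a+1) <= s_a *)
    have := adds_cell_addable add_b lt_a1b.
    by rewrite !row_t //; [lia|apply/eqP; lia].
  (* b = a + 1, and rows a, a + 1 of s differ: the domino is not vertical *)
  have eq_b : b = a.+1 by lia.
  subst b => noninc_s _; rewrite ltn_neqAle noninc_s andbT.
  by apply/eqP => eq_rows; apply: not_vert.
have [v add_v] := add_cell addable_b.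
have le_vp : yle v p.
  apply/yleE => i; rewrite add_v add_b row_t //.
  case: eqP => [_|_] //; move/yleE: lt_st.1 => /(_ i); lia.
have row_va : row v a = row s a by rewrite add_v eq_sym (negbTE neq_ba).
have neq_vt : v <> t by apply: (@row_neq _ _ a); rewrite row_va add_a eqxx; lia.
apply/neq_vt/only_t; first exact: adds_cell_ylt add_v.
split=> //; apply: (@row_neq _ _ a); move/yleE: lt_tp.1 => /(_ a).
by rewrite row_va add_a eqxx; lia.
Qed.

(* Conversely, a vertical domino added below two equal rows is a chain: a
   partition between s and p differs from s only in these two rows, which
   must stay ordered. *)
Lemma vertical_domino_chain s t p a :
  adds_cell s t a -> adds_cell t p a.+1 -> row s a.+1 = row s a -> chain2 s t p.
Proof.
move=> add_a add_a1 eq_rows.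
split; first exact: adds_cell_ylt add_a.
split; first exact: adds_cell_ylt add_a1.
move=> u [/yleE le_su neq_su] [/yleE le_up neq_up].
have row_p i : row p i = if (i == a) || (i == a.+1) then (row s a).+1 else row s i.
  by rewrite add_a1 !add_a; do !case: eqP; move=> * /=; lia.
have bounds i : row s i <= row u i <= row p i by rewrite le_su le_up.
have frame i : i != a -> i != a.+1 -> row u i = row s i.
  move=> /negbTE neq_ia /negbTE neq_ia1.
  by have := bounds i; rewrite row_p neq_ia neq_ia1 /=; lia.
have rows_ext (q : Defs.partition) : row u a = row q a -> row u a.+1 = row q a.+1 ->
    (forall i, i != a -> i != a.+1 -> row q i = row s i) -> u = q.
  move=> eq_a eq_a1 frame_q; apply: partition_ext => i.
  case: (eqVneq i a) => [->|neq_ia] //; case: (eqVneq i a.+1) => [->|neq_ia1] //.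
  by rewrite frame // frame_q.
have := bounds a.+1; have := bounds a; rewrite !row_p !eqxx orbT eq_rows /=.
move=> bounds_a bounds_a1; have noninc_u := row_noninc u a.
have row_ua : row u a = (row s a).+1.
  apply: NNPP => neq_a; apply/neq_su/esym/rows_ext => //; lia.
have row_ua1 : row u a.+1 = row s a.
  apply: NNPP => neq_a1; apply/neq_up/rows_ext; rewrite ?row_p ?eqxx ?orbT //.
  - lia.
  - by move=> i /negbTE neq_ia /negbTE neq_ia1; rewrite row_p neq_ia neq_ia1.
apply: rows_ext => [||i /negbTE neq_ia _]; rewrite add_a.
- by rewrite eqxx.
- by rewrite (gtn_eqF (ltnSn a)) row_ua1 eq_rows.
- by rewrite neq_ia.
Qed.

Lemma minimal_outside_cell s t r a :
  adds_cell s t a -> minimal_outside r s -> yle r t -> is_rect r a.+1 (row s a).+1.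
Proof.
move=> add_a min_r le_rt; have lt_a := adds_cell_new_row add_a le_rt min_r.1.
have eq_a : row r a = (row s a).+1.
  by move/yleE: le_rt => /(_ a); rewrite add_a eqxx; lia.
by rewrite -eq_a; exact: minimal_outside_rect min_r lt_a.
Qed.

(* The minimal elements outside a rectangle of m rows are a row, which is not
   above (1,1), and the column of m + 1 cells: so a minimal element outside
   the rectangle that lies above (1,1) reaches row m. *)
Lemma column_below_rect c r m n :
  is_rect r m.+1 n -> minimal_outside c r -> yle p11 c -> 0 < row c m.+1.
Proof.
move=> rect_r min_c le_11c; rewrite lt0n; apply/negP => /eqP c_m1.
have [j lt_j] := nyle_row min_c.1.
have le_jm : j <= m.
  by case: (leqP j m) => // lt_mj; have := row_mono c lt_mj; lia.
have lt_0 : row r 0 < row c 0.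
  by have := row_mono c (leq0n j); move: lt_j; rewrite !rect_r ltnS le_jm /=; lia.
have rect_c := minimal_outside_rect min_c lt_0.
by move/yleE: le_11c => /(_ 1); rewrite rect_c.
Qed.

(* Whenever [s, p] is a chain s < t < p, r is a
   minimal element outside s below t (the rectangle spanned by the cell t/s)
   and c >= (1,1) is a minimal element outside r (the column just below that
   rectangle), some u <= p not below t avoids c; that is, the cell p/t is
   not below t/s, so the domino p/s is horizontal. *)
Definition horizontal_dominoes (p : Defs.partition) : Prop :=
  forall s t r c, chain2 s t p ->
    minimal_outside r s -> yle r t -> minimal_outside c r -> yle p11 c ->
    exists u, yle u p /\ ~ yle u t /\ ~ yle c u.

(* With distinct parts there is no vertical domino, and the rectangle through
   a horizontal domino is the required u. *)
Lemma strict_rows_horizontal p : strict_rows p -> horizontal_dominoes p.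
Proof.
move=> strict_p s t r c chain_stp min_r le_rt min_c le_11c.
have [a [b [add_a add_b]]] := chain2_cells chain_stp.
have eq_ba : b = a.
  case: (chain2_shape chain_stp add_a add_b) => // [[eq_b eq_rows]]; subst b.
  have := strict_p a; rewrite !add_b !add_a !eqxx (gtn_eqF (ltnSn a)) eq_rows.
  by move/(_ isT); case: ifP; rewrite ltnn.
subst b; have rect_r := minimal_outside_cell add_a min_r le_rt.
have col_c := column_below_rect rect_r min_c le_11c.
have [u rect_u] := rect_exists a.+1 (row s a).+2.
exists u; split; [|split].
- by apply: rect_yle rect_u _; rewrite add_b add_a !eqxx.
- by move=> /yleE /(_ a); rewrite rect_u ltnSn add_a eqxx; lia.
- by move=> /yleE /(_ a.+1); rewrite rect_u ltnn; lia.
Qed.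

Lemma last_repeated_row p : ~ strict_rows p ->
  exists a, [/\ 0 < row p a.+1, row p a.+1 = row p a & row p a.+2 < row p a.+1].
Proof.
move=> not_strict.
have ex_rep : exists i, (0 < row p i.+1) && (row p i.+1 == row p i).
  apply: NNPP => no_rep; apply: not_strict => i pos_i.
  rewrite ltn_neqAle row_noninc andbT; apply/negP => /eqP eq_i.
  by apply: no_rep; exists i; rewrite pos_i eq_i eqxx.
have bound i : (0 < row p i.+1) && (row p i.+1 == row p i) -> i <= size (parts p).
  by case/andP; rewrite row_pos; lia.
have [a /andP [pos_a /eqP eq_a] max_a] := ex_maxnP ex_rep bound.
exists a; split=> //; rewrite ltn_neqAle row_noninc andbT.
apply/negP => /eqP eq_a1.
by have := max_a a.+1; rewrite eq_a1 eqxx pos_a /= => /(_ isT); lia.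
Qed.

(* A repeated part yields a vertical domino ending at p, for which the
   defining property fails. *)
Lemma horizontal_strict_rows p : horizontal_dominoes p -> strict_rows p.
Proof.
move=> horiz_p; apply: NNPP => /last_repeated_row [a [pos_a1 eq_a corner_a1]].
have [t add_a1] := remove_cell corner_a1.
have row_t i : i != a.+1 -> row t i = row p i.
  by move=> /negbTE neq_i; rewrite add_a1 neq_i.
have [s add_a] : exists s, adds_cell s t a.
  apply: remove_cell; rewrite (row_t a) ?(ltn_eqF (ltnSn a)) //.
  by move: (add_a1 a.+1); rewrite eqxx; lia.
have eq_rows : row s a.+1 = row s a.
  have t_a1 : row t a.+1 = row s a.+1 by rewrite add_a (gtn_eqF (ltnSn a)).
  have t_a : row t a = (row s a).+1 by rewrite add_a eqxx.
  have p_a1 : row p a.+1 = (row t a.+1).+1 by rewrite add_a1 eqxx.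
  have p_a : row p a = row t a by rewrite row_t // (ltn_eqF (ltnSn a)).
  lia.
have chain_stp := vertical_domino_chain add_a add_a1 eq_rows.
have [r rect_r] := rect_exists a.+1 (row s a).+1.
have [c rect_c] := rect_exists a.+2 1.
have min_r : minimal_outside r s.
  exact: rect_minimal_outside (adds_cell_addable add_a) rect_r.
have le_rt : yle r t by apply: rect_yle rect_r _; rewrite add_a eqxx.
have min_c : minimal_outside c r.
  have row_r_a1 : row r a.+1 = 0 by rewrite rect_r ltnn.
  apply: (@rect_minimal_outside _ _ a.+1); last by rewrite row_r_a1.
  by move=> i lt_i; rewrite row_r_a1 rect_r lt_i.
have le_11c : yle p11 c by apply/yleE => -[|[|i]]; rewrite rect_c /row /= ?nth_nil.
have [u [le_up [nle_ut nle_cu]]] :=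
  horiz_p s t r c chain_stp min_r le_rt min_c le_11c.
apply: nle_cu; apply: rect_yle rect_c _.
by have := adds_cell_new_row add_a1 le_up nle_ut; lia.
Qed.

(* The minimality conditions on t, r and c are universal
   statements about u; moved into the matrix they become the first three
   alternatives of [witness_formula], which exhibit a counterexample u. *)
Definition var_p : term := TVar 0.
Definition var_s : term := TVar 1.
Definition var_t : term := TVar 2.
Definition var_r : term := TVar 3.
Definition var_c : term := TVar 4.
Definition var_u : term := TVar 5.

Definition FImp (f g : formula) : formula := FOr (FNot f) g.
Definition FLt (a b : term) : formula := FAnd (FLe a b) (FNot (FEq a b)).
Definition FNle (a b : term) : formula := FNot (FLe a b).

Definition hypotheses_formula : formula :=
  FAnd (FLt var_s var_t) (FAnd (FLt var_t var_p) (FAnd (FNle var_r var_s)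
    (FAnd (FLe var_r var_t) (FAnd (FNle var_c var_r) (FLe TC var_c))))).

Definition witness_formula : formula :=
  FOr (FAnd (FLt var_s var_u) (FAnd (FLt var_u var_p) (FNot (FEq var_u var_t))))
  (FOr (FAnd (FLt var_u var_r) (FNle var_u var_s))
  (FOr (FAnd (FLt var_u var_c) (FNle var_u var_r))
       (FAnd (FLe var_u var_p) (FAnd (FNle var_u var_t) (FNle var_c var_u))))).

Definition domino_formula : formula :=
  FForall 1 (FForall 2 (FForall 3 (FForall 4
    (FExists 5 (FImp hypotheses_formula witness_formula))))).

Lemma domino_formula_Pi2 : is_Pi 2 domino_formula.
Proof. by []. Qed.

Lemma sat_domino_matrix e p s t r c u :
  sat (upd (upd (upd (upd (upd (upd e 0 p) 1 s) 2 t) 3 r) 4 c) 5 u)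
      (FImp hypotheses_formula witness_formula) <->
  ~ (ylt s t /\ ylt t p /\ ~ yle r s /\ yle r t /\ ~ yle c r /\ yle p11 c) \/
  ((ylt s u /\ ylt u p /\ u <> t) \/ (ylt u r /\ ~ yle u s) \/
   (ylt u c /\ ~ yle u r) \/ (yle u p /\ ~ yle u t /\ ~ yle c u)).
Proof. exact: iff_refl. Qed.

Lemma sat_domino_formula e p :
  sat (upd e 0 p) domino_formula <-> horizontal_dominoes p.
Proof.
split=> [sat_p s t r c|horiz_p s t r c].
  move=> [lt_st [lt_tp only_t]] [nle_rs min_r] le_rt [nle_cr min_c] le_11c.
  have [u /sat_domino_matrix [|[[lt_su [lt_up neq_ut]]|[[lt_ur nle_us]|
                             [[lt_uc nle_ur]|witness_u]]]]] := sat_p s t r c.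
  - by case; do !(split; first done).
  - by case: neq_ut; apply: only_t.
  - by case: nle_us; apply: min_r.
  - by case: nle_ur; apply: min_c.
  - by exists u.
have [[u bad_u]|no_bad] := classic (exists u, (ylt s u /\ ylt u p /\ u <> t) \/
                             (ylt u r /\ ~ yle u s) \/ (ylt u c /\ ~ yle u r)).
  by exists u; apply/sat_domino_matrix; right; tauto.
have [hyps|no_hyps] :=
  classic (ylt s t /\ ylt t p /\ ~ yle r s /\ yle r t /\ ~ yle c r /\ yle p11 c);
  last by exists s; apply/sat_domino_matrix; left.
move: hyps => [lt_st [lt_tp [nle_rs [le_rt [nle_cr le_11c]]]]].
have only_t u : ylt s u -> ylt u p -> u = t.
  by move=> lt_su lt_up; apply: NNPP => neq_ut; apply: no_bad; exists u; left.
have min_r u : ylt u r -> yle u s.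
  by move=> lt_ur; apply: NNPP => nle_us; apply: no_bad; exists u; right; left.
have min_c u : ylt u c -> yle u r.
  by move=> lt_uc; apply: NNPP => nle_ur; apply: no_bad; exists u; right; right.
have [u witness_u] := horiz_p s t r c (conj lt_st (conj lt_tp only_t))
  (conj nle_rs min_r) le_rt (conj nle_cr min_c) le_11c.
by exists u; apply/sat_domino_matrix; do 4 right.
Qed.

Theorem proposition3p5 : Pi_definable 2 distinct_parts.
Proof.
exists domino_formula, 0; split; first exact: domino_formula_Pi2.
move=> e p; rewrite sat_domino_formula distinct_partsE.
by split; [exact: horizontal_strict_rows | exact: strict_rows_horizontal].
Qed.
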